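(* In the model below, let $(\mathbf A^\dagger,\mathbf q^\dagger)$ be any maximizer of $\Omega$ over $\mathcal A\times\mathbb R^n_{\ge0}$ and $\mathbf x^\dagger=\mathbf A^\dagger\mathbf q^\dagger$. Then: (i) If $r(\boldsymbol\gamma)\le1\le R(\boldsymbol\gamma)$, then $\mathbf q^\dagger=\boldsymbol\gamma$ and $\mathbf x^\dagger=\boldsymbol\beta$; moreover, unless there exists $\boldsymbol\sigma\in\{-1,1\}^n$ with $\boldsymbol\sigma^\top\boldsymbol\gamma=1$, every such $\mathbf A^\dagger$ has $\operatorname{rank}(\mathbf A^\dagger)\ge2$. (ii) If $R(\boldsymbol\gamma)\le1$, then $q_i^\dagger=\gamma_i+\dfrac{\alpha(1-R(\boldsymbol\gamma))}{1+n\alpha}$ for all $i$, $\mathbf x^\dagger=R(\mathbf q^\dagger)\boldsymbol\beta$, and $\mathbf A^\dagger$ is unique with $\mathbf a_i^\dagger=\boldsymbol\beta$ for all $i$. (iii) If $r(\boldsymbol\gamma)\ge1$ and $i$ is the index with $\gamma_i=\|\boldsymbol\gamma\|_\infty$, then $q_i^\dagger=\gamma_i-\dfrac{\alpha(r(\boldsymbol\gamma)-1)}{1+n\alpha}$ and $q_j^\dagger=\gamma_j+\dfrac{\alpha(r(\boldsymbol\gamma)-1)}{1+n\alpha}$ for all $j\ne i$, $\mathbf x^\dagger=r(\mathbf q^\dagger)\boldsymbol\beta$, and $\mathbf A^\dagger$ is unique with $\mathbf a_i^\dagger=\boldsymbol\beta$ and $\mathbf a_j^\dagger=-\boldsymbol\beta$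 for all $j\ne i$.
   Context: Model: integers $n\ge2$, $m\ge2$; parameters $\alpha>0$, $\boldsymbol\beta\in\mathbb R^m$ with $\|\boldsymbol\beta\|_2=1$, $\boldsymbol\gamma\in\mathbb R^n$ with $\gamma_i>0$ for all $i$. $\mathcal A$ is the set of real $m\times n$ matrices $\mathbf A=[\mathbf a_1,\dots,\mathbf a_n]$ with $\|\mathbf a_i\|_2=1$ for all $i$. With $\mathbf x=\mathbf A\mathbf q$, total surplus is $\Omega(\mathbf A,\mathbf q)=\alpha(\mathbf x^\top\boldsymbol\beta-\tfrac12\mathbf x^\top\mathbf x)+\mathbf q^\top\boldsymbol\gamma-\tfrac12\mathbf q^\top\mathbf q$. For $\mathbf v\in\mathbb R^n$: $R(\mathbf v)=\|\mathbf v\|_1$, $r(\mathbf v)=2\|\mathbf v\|_\infty-\|\mathbf v\|_1$. *)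

From HB Require Import structures.
From mathcomp Require Import all_boot all_order all_algebra.
From mathcomp Require Import reals.
Set Implicit Arguments. Unset Strict Implicit. Unset Printing Implicit Defensive.
Import Order.TTheory GRing.Theory Num.Theory.
Local Open Scope ring_scope.

Section Defs.
Variable R : realType.

Definition dotv (k : nat) (u v : 'cV[R]_k) : R := \sum_(i < k) u i 0 * v i 0.

Definition norm2 (k : nat) (v : 'cV[R]_k) : R := Num.sqrt (dotv v v).

Definition norm1 (k : nat) (v : 'cV[R]_k) : R := \sum_(i < k) `|v i 0|.

Definition norminf (k : nat) (v : 'cV[R]_k) : R := \big[Num.max/0]_(i < k) `|v i 0|.

Definition Rfun (k : nat) (v : 'cV[R]_k) : R := norm1 v.
Definition rfun (k : nat) (v : 'cV[R]_k) : R := 2 * norminf v - norm1 v.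

Definition inAset (m n : nat) (A : 'M[R]_(m, n)) : Prop :=
  forall i : 'I_n, norm2 (col i A) = 1.

Definition Omega (m n : nat) (alpha : R) (beta : 'cV[R]_m) (gamma : 'cV[R]_n)
  (A : 'M[R]_(m, n)) (q : 'cV[R]_n) : R :=
  let x := A *m q in
  alpha * (dotv x beta - 2^-1 * dotv x x) + dotv q gamma - 2^-1 * dotv q q.

Definition nonneg_vec (n : nat) (q : 'cV[R]_n) : Prop := forall i, 0 <= q i 0.

Definition is_maximizer (m n : nat) (alpha : R) (beta : 'cV[R]_m) (gamma : 'cV[R]_n)
  (A : 'M[R]_(m, n)) (q : 'cV[R]_n) : Prop :=
  [/\ inAset A, nonneg_vec q &
      forall (A' : 'M[R]_(m, n)) (q' : 'cV[R]_n), inAset A' -> nonneg_vec q' ->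
        Omega alpha beta gamma A' q' <= Omega alpha beta gamma A q].

End Defs.

(* Since [Omega = alpha/2 + |gamma|^2/2 - defect/2] with
   [defect A q = alpha |A q - beta|^2 + |q - gamma|^2], maximizers minimize the defect.
   (i) When [r(gamma) <= 1 <= R(gamma)] the sides [gamma_j] and [1] close a planar
   polygon, giving unit columns with [A gamma = beta]; so the minimal defect is [0].
   A maximizer of rank [<= 1] has columns [+- a], and then [beta = (sum sigma_j gamma_j) a].
   (ii), (iii) For the sign vector [w] (all ones, resp. [+1] at the dominant index and
   [-1] elsewhere), [|A q - beta|] dominates [|1 - <w, q>|] on the relevant side; the
   resulting quadratic lower bound is attained only at [q = gamma + shift w] with the
   columns [w_j beta]. *)

From HB Require Import structures.
From mathcomp Require Import all_boot all_order all_algebra.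
From mathcomp Require Import reals ring lra.
Import Order.TTheory GRing.Theory Num.Theory.
Local Open Scope ring_scope.

Set Implicit Arguments. Unset Strict Implicit. Unset Printing Implicit Defensive.

Lemma psumr_weighted_eq0 (R : realFieldType) (I : finType) (q c : I -> R) :
  (forall i, 0 < q i) -> (forall i, 0 <= c i) -> \sum_i q i * c i = 0 ->
  forall i, c i = 0.
Proof.
move=> q_gt0 c_ge0 sum0 i.
have qc_ge0 i' : true -> 0 <= q i' * c i' by move=> _; rewrite mulr_ge0 // ltW.
have /eqP := psumr_eq0P qc_ge0 sum0 (i := i) isT.
by rewrite mulf_eq0 gt_eqF //= => /eqP.
Qed.

(* When [e - t] has the sign [s] this follows from [a (e - t)^2 <= P];
   otherwise [e (e - t) <= 0] already gives it. *)
Lemma sqr_le_add_linear (R : realFieldType) (a P e t s : R) :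
  0 < a -> 0 <= P -> 0 <= s * e ->
  (0 <= s * (e - t) -> a * (e - t) ^+ 2 <= P) -> a * e ^+ 2 <= P + 2 * a * e * t.
Proof.
move=> a_gt0 P_ge0 se_ge0 bound; case: (lerP 0 (s * (e - t))) => [/bound|st_lt0].
  by nra.
have e_et : e * (e - t) <= 0.
  case: (ltrgt0P s) => s0; last by move: st_lt0; rewrite s0 mul0r ltxx.
  - by move: se_ge0 st_lt0; rewrite pmulr_rge0 // pmulr_rlt0 //; nra.
  - by move: se_ge0 st_lt0; rewrite nmulr_rge0 // nmulr_rlt0 //; nra.
nra.
Qed.

Lemma sqr_le_sqr_addr (R : realDomainType) (a e : R) :
  0 <= a -> 0 <= e -> a ^+ 2 <= (a + e) ^+ 2.
Proof. by move=> a_ge0 e_ge0; nra. Qed.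

Lemma sqr_addr_le_sqr (R : realDomainType) (a e : R) :
  0 <= a -> 0 <= e -> (a + e) ^+ 2 <= a ^+ 2 -> e = 0.
Proof. by move=> a_ge0 e_ge0 le; apply/le_anti; rewrite e_ge0 andbT; nra. Qed.

Lemma dominant_shift_le (R : realFieldType) (a N r d : R) :
  0 < a -> 2 <= N -> 1 <= r -> r <= d -> 2 * (a * (r - 1) / (1 + N * a)) <= d.
Proof.
move=> a_gt0 N_ge2 r_ge1 r_le_d.
have den_gt0 : 0 < 1 + N * a by rewrite ltr_wpDr // mulr_ge0 ?ltW //; lra.
have slack1 : 0 <= a * (d - r + 1) by apply: mulr_ge0; lra.
have slack2 : 0 <= a * d * (N - 2) by apply: mulr_ge0; [apply: mulr_ge0|]; lra.
rewrite mulrA ler_pdivrMr //; nra.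
Qed.

Lemma sum_ge_term (R : realDomainType) n (g : 'I_n -> R) j :
  (forall l, 0 <= g l) -> g j <= \sum_l g l.
Proof.
by move=> g_ge0; rewrite (bigD1 j) //= lerDl sumr_ge0.
Qed.

(* The apex [(x, y)] lies at signed distance [P / |(X, Y)|] along [(X, Y)]
   and [H / |(X, Y)|] across it; [H^2 >= 0] is the triangle inequality. *)
Lemma plane_triangle (R : rcfType) (a b X Y : R) : 0 <= a -> 0 <= b ->
  (a - b) ^+ 2 <= X ^+ 2 + Y ^+ 2 -> X ^+ 2 + Y ^+ 2 <= (a + b) ^+ 2 ->
  exists x y : R, x ^+ 2 + y ^+ 2 = a ^+ 2 /\ (X - x) ^+ 2 + (Y - y) ^+ 2 = b ^+ 2.
Proof.
move=> a_ge0 b_ge0 lo hi; set d2 := X ^+ 2 + Y ^+ 2 in lo hi.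
have [d2_0|d2_neq0] := eqVneq d2 0.
  have [X0 Y0] : X = 0 /\ Y = 0.
    by move: d2_0; rewrite /d2 => /eqP; rewrite paddr_eq0 ?sqr_ge0 // !sqrf_eq0 => /andP [/eqP ? /eqP ?].
  have ab : a = b by move: lo; rewrite d2_0; nra.
  by exists a, 0; rewrite X0 Y0 ab; split; ring.
set P := (d2 + a ^+ 2 - b ^+ 2) / 2.
have H2_ge0 : 0 <= a ^+ 2 * d2 - P ^+ 2.
  have -> : a ^+ 2 * d2 - P ^+ 2 = ((a + b) ^+ 2 - d2) * (d2 - (a - b) ^+ 2) / 4 by rewrite /P; field.
  by rewrite divr_ge0 ?mulr_ge0 ?subr_ge0.
set H := Num.sqrt (a ^+ 2 * d2 - P ^+ 2).
have H2 : H ^+ 2 = a ^+ 2 * d2 - P ^+ 2 by rewrite sqr_sqrtr.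
exists ((P * X - H * Y) / d2), ((P * Y + H * X) / d2); split.
  have -> : ((P * X - H * Y) / d2) ^+ 2 + ((P * Y + H * X) / d2) ^+ 2 = (P ^+ 2 + H ^+ 2) / d2.
    by rewrite /d2 in d2_neq0 *; field.
  by rewrite H2; field.
have -> : (X - (P * X - H * Y) / d2) ^+ 2 + (Y - (P * Y + H * X) / d2) ^+ 2 =
    d2 - 2 * P + (P ^+ 2 + H ^+ 2) / d2 by rewrite /d2 in d2_neq0 *; field.
by rewrite H2 /P; field.
Qed.

(* Induction on the number of sides: the first side [g 0] and a suitable
   intermediate length [l] close a triangle with [(X, Y)], and the remaining
   sides close a polygon on the third side of length [l]. *)
Lemma plane_polygon_closure (R : rcfType) n (g : 'I_n -> R) (X Y d : R) :
  (forall j, 0 <= g j) -> 0 <= d -> X ^+ 2 + Y ^+ 2 = d ^+ 2 ->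
  d <= \sum_j g j -> (forall j, 2 * g j <= \sum_j g j + d) ->
  exists x y : 'I_n -> R, [/\ forall j, x j ^+ 2 + y j ^+ 2 = g j ^+ 2,
    \sum_j x j = X & \sum_j y j = Y].
Proof.
elim: n g X Y d => [|n IHn] g X Y d g_ge0 d_ge0 XYd d_le long.
  have d0 : d = 0 by apply/le_anti; rewrite d_ge0 andbT; move: d_le; rewrite big_ord0.
  have [X0 Y0] : X = 0 /\ Y = 0.
    by move/eqP: XYd; rewrite d0 expr0n paddr_eq0 ?sqr_ge0 // !sqrf_eq0 => /andP [/eqP ? /eqP ?].
  by exists (fun _ => 0), (fun _ => 0); split=> [[]//||]; rewrite big_ord0.
pose g' j := g (lift ord0 j); set S' := \sum_j g' j.
have S_eq : \sum_j g j = g ord0 + S' by rewrite big_ord_recl.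
rewrite S_eq in d_le long.
have g'_ge0 j : 0 <= g' j by apply: g_ge0.
have long' j : 2 * g' j - S' <= d + g ord0 by have := long (lift ord0 j); rewrite /g'; lra.
pose l := Num.max `|d - g ord0| (\big[Num.max/0]_j (2 * g' j - S')).
have l_ge : `|d - g ord0| <= l /\ forall j, 2 * g' j <= S' + l.
  split=> [|j]; first by rewrite le_max lexx.
  by have := le_bigmax 0 (fun j => 2 * g' j - S') j; rewrite -lerBlDl (le_max _ _ _) => ->; rewrite orbT.
have l_le : l <= S' /\ l <= d + g ord0.
  rewrite !ge_max; split; apply/andP; split.
  - by rewrite ler_norml; apply/andP; split; have := long ord0; lra.
  - by apply: bigmax_le => [|j _]; [exact: sumr_ge0 | have := sum_ge_term j g'_ge0; rewrite -/S'; lra].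
  - by rewrite ler_norml; apply/andP; split; have := g_ge0 ord0; lra.
  - by apply: bigmax_le => [|j _]; [rewrite addr_ge0 | exact: long'].
case: l_ge l_le => dist_le long'_l [l_S' l_dg].
have l_ge0 : 0 <= l := le_trans (normr_ge0 _) dist_le.
have [x0 [y0 [side0 rest]]] : exists x0 y0 : R,
    x0 ^+ 2 + y0 ^+ 2 = g ord0 ^+ 2 /\ (X - x0) ^+ 2 + (Y - y0) ^+ 2 = l ^+ 2.
  apply: plane_triangle; rewrite ?XYd //; move: dist_le; rewrite ler_norml => /andP [? ?].
  - have : 0 <= (d - g ord0 + l) * (d + g ord0 - l) by apply: mulr_ge0; lra.
    by nra.
  - have : 0 <= (g ord0 + l - d) * (g ord0 + l + d).
      by apply: mulr_ge0; have := g_ge0 ord0; lra.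
    by nra.
have [x' [y' [sides' sumx' sumy']]] := IHn g' _ _ l g'_ge0 l_ge0 rest l_S' long'_l.
exists (fun j => if unlift ord0 j is Some k then x' k else x0).
exists (fun j => if unlift ord0 j is Some k then y' k else y0).
split=> [j||]; last 2 first.
- rewrite big_ord_recl /= unlift_none; under eq_bigr do rewrite liftK.
  by rewrite sumx'; ring.
- rewrite big_ord_recl /= unlift_none; under eq_bigr do rewrite liftK.
  by rewrite sumy'; ring.
by case: unliftP => [k ->|->].
Qed.

Section DotProduct.
Variables (R : realType) (k : nat).
Implicit Types (u v w : 'cV[R]_k) (a : R).

Lemma dotvC u v : dotv u v = dotv v u.
Proof. by apply: eq_bigr => i _; rewrite mulrC. Qed.

Lemma dotvDl u v w : dotv (u + v) w = dotv u w + dotv v w.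
Proof. by rewrite /dotv -big_split; apply: eq_bigr => i _; rewrite !mxE mulrDl. Qed.

Lemma dotvZl a u w : dotv (a *: u) w = a * dotv u w.
Proof. by rewrite /dotv mulr_sumr; apply: eq_bigr => i _; rewrite !mxE mulrA. Qed.

Lemma dotvBl u v w : dotv (u - v) w = dotv u w - dotv v w.
Proof. by rewrite dotvDl -scaleN1r dotvZl mulN1r. Qed.

Lemma dotvDr u v w : dotv w (u + v) = dotv w u + dotv w v.
Proof. by rewrite dotvC dotvDl !(dotvC w). Qed.

Lemma dotvZr a u w : dotv w (a *: u) = a * dotv w u.
Proof. by rewrite dotvC dotvZl dotvC. Qed.

Lemma dotvBr u v w : dotv w (u - v) = dotv w u - dotv w v.
Proof. by rewrite dotvC dotvBl !(dotvC w). Qed.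

Lemma dotv0l v : dotv 0 v = 0.
Proof. by rewrite /dotv big1 // => i _; rewrite mxE mul0r. Qed.

Lemma dotv_ge0 u : 0 <= dotv u u.
Proof. by apply: sumr_ge0 => i _; rewrite -expr2 sqr_ge0. Qed.

Lemma dotv_eq0 u : dotv u u = 0 -> u = 0.
Proof.
move=> u0; apply/matrixP => i j; rewrite mxE (ord1 j).
have sq0 : \sum_(l < k) u l 0 ^+ 2 = 0.
  by rewrite -[RHS]u0; apply: eq_bigr => l _; rewrite expr2.
have /eqP := psumr_eq0P (fun l _ => sqr_ge0 (u l 0)) sq0 (i := i) isT.
by rewrite sqrf_eq0 => /eqP.
Qed.

Lemma norm2_eq1 u : (norm2 u = 1) <-> (dotv u u = 1).
Proof.
rewrite /norm2; split=> [u1|->]; last exact: sqrtr1.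
by rewrite -(sqr_sqrtr (dotv_ge0 u)) u1 expr1n.
Qed.

Lemma dotv_sqr_le_unit u v : dotv u u = 1 -> dotv v u ^+ 2 <= dotv v v.
Proof.
move=> u1; have := dotv_ge0 (v - dotv v u *: u).
by rewrite !(dotvBl, dotvBr, dotvZl, dotvZr) u1 (dotvC u v); nra.
Qed.

Section UnitVectors.
Variables u v : 'cV[R]_k.
Hypotheses (u1 : dotv u u = 1) (v1 : dotv v v = 1).

Lemma dotv_unit_le1 : dotv u v <= 1.
Proof. by have := dotv_ge0 (u - v); rewrite !(dotvBl, dotvBr) u1 v1 (dotvC v u); lra. Qed.

Lemma dotv_unit_geN1 : -1 <= dotv u v.
Proof. by have := dotv_ge0 (u + v); rewrite !(dotvDl, dotvDr) u1 v1 (dotvC v u); lra. Qed.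

(* [|u - s v|^2 = 2 - 2 s <u, v>] vanishes. *)
Lemma dotv_unit_sign s : s ^+ 2 = 1 -> dotv u v = s -> u = s *: v.
Proof.
move=> s2 uv; apply/eqP; rewrite -subr_eq0; apply/eqP/dotv_eq0.
rewrite !(dotvBl, dotvBr, dotvZl, dotvZr) u1 v1 (dotvC v u) uv.
by rewrite expr2 in s2; nra.
Qed.

End UnitVectors.
End DotProduct.

Lemma mulmx_cols (R : realType) m n (A : 'M[R]_(m, n)) (q : 'cV[R]_n) :
  A *m q = \sum_j q j 0 *: col j A.
Proof.
apply/matrixP => i l; rewrite !mxE summxE; apply: eq_bigr => j _.
by rewrite !mxE (ord1 l) mulrC.
Qed.

Lemma dotv_mulmxl (R : realType) m n (A : 'M[R]_(m, n)) q v :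
  dotv (A *m q) v = \sum_j q j 0 * dotv (col j A) v.
Proof.
rewrite mulmx_cols /dotv.
under eq_bigr do rewrite summxE mulr_suml.
rewrite exchange_big /=; apply: eq_bigr => j _.
by rewrite mulr_sumr; apply: eq_bigr => i _; rewrite !mxE mulrA.
Qed.

Lemma dotv_delta (R : realType) m (l : 'I_m) (v : 'cV[R]_m) :
  dotv (delta_mx l 0) v = v l 0.
Proof.
rewrite /dotv (bigD1 l) //= big1 => [|k kl]; first by rewrite !mxE !eqxx mul1r addr0.
by rewrite !mxE (negbTE kl) mul0r.
Qed.

(* [e_l - v_l v] is orthogonal to [v] and nonzero as soon as [v_l^2 < 1],
   which holds for some [l] because [v] has at least two coordinates. *)
Lemma exists_unit_orthogonal (R : realType) m (v : 'cV[R]_m) :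
  (2 <= m)%N -> dotv v v = 1 -> exists e : 'cV[R]_m, dotv e e = 1 /\ dotv e v = 0.
Proof.
move=> m_ge2 v1.
have dotv_sqr : dotv v v = \sum_k v k 0 ^+ 2 by apply: eq_bigr => k _; rewrite expr2.
have [l vl_lt1] : exists l, v l 0 ^+ 2 < 1.
  have vl_le1 l : v l 0 ^+ 2 <= 1.
    by rewrite -v1 dotv_sqr (sum_ge_term (g := fun k => v k 0 ^+ 2)) // => k; apply: sqr_ge0.
  case: (pickP (fun l => v l 0 ^+ 2 != 1)) => [l vl|all1].
    by exists l; rewrite lt_neqAle vl vl_le1.
  move: v1; rewrite dotv_sqr (eq_bigr (fun _ => 1)) => [|k _]; last by apply/eqP; rewrite -[_ == _]negbK all1.
  by rewrite sumr_const card_ord => /eqP; rewrite pnatr_eq1 => /eqP m1; rewrite m1 in m_ge2.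
pose e := delta_mx l 0 - v l 0 *: v.
have ev : dotv e v = 0 by rewrite dotvBl dotvZl dotv_delta v1; ring.
have ee : dotv e e = 1 - v l 0 ^+ 2.
  by rewrite {2}/e dotvBr dotvZr ev mulr0 subr0 dotvC dotv_delta !mxE !eqxx expr2.
have ee_gt0 : 0 < 1 - v l 0 ^+ 2 by rewrite subr_gt0.
exists ((Num.sqrt (1 - v l 0 ^+ 2))^-1 *: e); split; last by rewrite dotvZl ev mulr0.
by rewrite dotvZl dotvZr ee mulrA -expr2 exprVn sqr_sqrtr ?mulVf ?gt_eqF // ltW.
Qed.

Lemma ord2_cases (a : 'I_2) : a = ord0 \/ a = lift ord0 ord0.
Proof. by case: a => [[|[|//]]] ha; [left|right]; apply: val_inj. Qed.

(* The Gram matrix of the two columns has determinant [1 - c^2 <> 0]. *)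
Lemma rank_ge2_of_unit_cols (R : realType) m n (A : 'M[R]_(m, n)) (j0 j : 'I_n) :
  dotv (col j0 A) (col j0 A) = 1 -> dotv (col j A) (col j A) = 1 ->
  dotv (col j0 A) (col j A) ^+ 2 != 1 -> (2 <= \rank A)%N.
Proof.
move=> a0 a1; set c := dotv _ _ => c2_neq1.
pose g (l : 'I_2) := if l == ord0 then j0 else j.
pose B := colsub g A.
have rankB : (\rank B <= \rank A)%N.
  have -> : B = A *m colsub g 1%:M by rewrite mulmx_colsub mulmx1.
  exact: mxrankM_maxl.
pose G := B^T *m B.
have G_dot a b : G a b = dotv (col (g a) A) (col (g b) A).
  by rewrite !mxE; apply: eq_bigr => p _; rewrite !mxE.
pose H : 'M[R]_2 := (1 - c ^+ 2)^-1 *: \matrix_(a, b) (if a == b then 1 else - c).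
have c2 : 1 - c ^+ 2 != 0 by rewrite subr_eq0 eq_sym.
have GH : G *m H = 1%:M.
  apply/matrixP => a b; rewrite !mxE !big_ord_recl big_ord0 addr0 !G_dot /H !mxE.
  have c' : dotv (col j A) (col j0 A) = c by rewrite dotvC.
  by case: (ord2_cases a) => ->; case: (ord2_cases b) => ->;
    rewrite /g /= ?a0 ?a1 ?c' -/c /=; field.
have rankG : \rank G = 2 by apply: mxrank_unit; case: (mulmx1_unit GH).
by apply: leq_trans rankB; rewrite -[X in (X <= _)%N]rankG mxrankM_maxr.
Qed.

(* If all columns are [+- a_j0], then [A g = s a_j0] with [s = sum sg_j g_j],
   and [s^2 = 1] when [A g] is a unit vector. *)
Lemma sign_pattern_or_rank_ge2 (R : realType) m n (A : 'M[R]_(m, n)) (g : 'cV[R]_n) :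
  (0 < n)%N -> (forall j, dotv (col j A) (col j A) = 1) ->
  dotv (A *m g) (A *m g) = 1 ->
  (exists sigma : 'I_n -> R, (forall i, sigma i = 1 \/ sigma i = -1) /\
     \sum_(i < n) sigma i * g i 0 = 1) \/ (2 <= \rank A)%N.
Proof.
move=> n_gt0 cols1 Ag1; pose j0 : 'I_n := Ordinal n_gt0.
pose sg j := dotv (col j0 A) (col j A).
have [sg2|] := boolP [forall j, sg j ^+ 2 == 1]; last first.
  by rewrite negb_forall => /existsP [j]; right; apply: (rank_ge2_of_unit_cols (j0 := j0) (j := j)) => //.
have {}sg2 j : sg j ^+ 2 = 1 by apply/eqP/(forallP sg2).
have col_sg j : col j A = sg j *: col j0 A.
  by apply: dotv_unit_sign; rewrite ?cols1 // dotvC.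
set s := \sum_j sg j * g j 0.
have Ag : A *m g = s *: col j0 A.
  rewrite mulmx_cols /s scaler_suml; apply: eq_bigr => j _.
  by rewrite col_sg scalerA mulrC.
have s2 : s ^+ 2 = 1 by move: Ag1; rewrite Ag dotvZl dotvZr cols1 mulr1 -expr2.
left; exists (fun j => s * sg j); split.
  move=> i; have : (s * sg i) ^+ 2 == 1 by rewrite exprMn s2 sg2 mulr1.
  by rewrite sqrf_eq1 => /orP [/eqP|/eqP]; [left|right].
by rewrite -[RHS]s2 expr2 mulr_sumr; apply: eq_bigr => j _; rewrite mulrA.
Qed.

Lemma dotv_sign_vec (R : realType) n (w : 'cV[R]_n) :
  (forall j, w j 0 ^+ 2 = 1) -> dotv w w = n%:R.
Proof.
move=> w_sign; rewrite /dotv (eq_bigr (fun _ => 1)) ?sumr_const ?card_ord // => j _.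
by rewrite -expr2.
Qed.

Lemma norm1_nonneg (R : realType) n (v : 'cV[R]_n) :
  nonneg_vec v -> norm1 v = \sum_j v j 0.
Proof. by move=> v_ge0; apply: eq_bigr => j _; rewrite ger0_norm. Qed.

Lemma norminf_dominant (R : realType) n (v : 'cV[R]_n) i :
  0 <= v i 0 -> (forall j, `|v j 0| <= v i 0) -> norminf v = v i 0.
Proof.
move=> vi_ge0 dom; apply/le_anti; rewrite bigmax_le //=.
by have := le_bigmax 0 (fun j => `|v j 0|) i; rewrite ger0_norm.
Qed.

Section Defect.
Variables (R : realType) (n m : nat) (alpha : R) (beta : 'cV[R]_m) (gamma : 'cV[R]_n).
Hypotheses (alpha_gt0 : 0 < alpha) (beta1 : dotv beta beta = 1).

Definition defect (A : 'M[R]_(m, n)) (q : 'cV[R]_n) :=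
  alpha * dotv (A *m q - beta) (A *m q - beta) + dotv (q - gamma) (q - gamma).

Lemma Omega_defect A q :
  Omega alpha beta gamma A q = alpha / 2 + dotv gamma gamma / 2 - defect A q / 2.
Proof.
rewrite /Omega /defect !(dotvBl, dotvBr) beta1 (dotvC beta) (dotvC gamma q).
by field.
Qed.

Lemma maximizer_defect_le A q A' q' : is_maximizer alpha beta gamma A q ->
  inAset A' -> nonneg_vec q' -> defect A q <= defect A' q'.
Proof. by case=> _ _ max A'in q'ge0; have := max A' q' A'in q'ge0; rewrite !Omega_defect; lra. Qed.

Definition sign_mx (w : 'cV[R]_n) : 'M[R]_(m, n) := \matrix_(k, j) (w j 0 * beta k 0).

Lemma col_sign_mx w j : col j (sign_mx w) = w j 0 *: beta.
Proof. by apply/matrixP => k l; rewrite !mxE (ord1 l). Qed.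

Lemma mulmx_sign_mx w q : sign_mx w *m q = dotv w q *: beta.
Proof.
rewrite mulmx_cols; under eq_bigr do rewrite col_sign_mx scalerA.
by rewrite -scaler_suml; congr (_ *: _); apply: eq_bigr => j _; rewrite mulrC.
Qed.

Section SignPattern.
Variable w : 'cV[R]_n.
Hypothesis w_sign : forall j, w j 0 ^+ 2 = 1.

Lemma sign_mx_in : inAset (sign_mx w).
Proof.
move=> j; apply/norm2_eq1.
by rewrite col_sign_mx dotvZl dotvZr beta1 mulr1 -expr2 w_sign.
Qed.

(* [shifted] minimizes [defect (sign_mx w) q = alpha (1 - <w, q>)^2 + |q - gamma|^2];
   [shift] solves its first-order condition. *)
Definition shift := alpha * (1 - dotv w gamma) / (1 + n%:R * alpha).
Definition shifted := gamma + shift *: w.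

Lemma shift_den_gt0 : 0 < 1 + n%:R * alpha.
Proof. by rewrite ltr_wpDr // mulr_ge0 // ltW. Qed.

Lemma one_sub_dotv_shifted : 1 - dotv w shifted = shift / alpha.
Proof.
rewrite /shifted dotvDr dotvZr (dotv_sign_vec w_sign) /shift.
by field; rewrite !gt_eqF ?shift_den_gt0.
Qed.

Lemma defect_shifted_expand A q : defect A q =
  alpha * dotv (A *m q - beta) (A *m q - beta) + dotv (q - shifted) (q - shifted)
  + 2 * shift * dotv w (q - shifted) + n%:R * shift ^+ 2.
Proof.
rewrite /defect; have -> : q - gamma = (q - shifted) + shift *: w by rewrite /shifted opprD addrA subrK.
move: (q - shifted) => d.
rewrite dotvDl !dotvDr !dotvZl !dotvZr (dotv_sign_vec w_sign) (dotvC d w).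
ring.
Qed.

Lemma defect_sign_mx_shifted :
  defect (sign_mx w) shifted = shift ^+ 2 / alpha + n%:R * shift ^+ 2.
Proof.
rewrite /defect mulmx_sign_mx -[X in _ - X]scale1r -scalerBl.
have -> : shifted - gamma = shift *: w by rewrite /shifted addrC addKr.
have -> : dotv w shifted - 1 = - (shift / alpha) by rewrite -one_sub_dotv_shifted; ring.
rewrite !(dotvZl, dotvZr) beta1 (dotv_sign_vec w_sign).
by field; rewrite gt_eqF.
Qed.

Lemma shifted_optimal A q s : defect A q <= defect (sign_mx w) shifted ->
  0 <= s * shift ->
  (0 <= s * (1 - dotv w q) ->
     (1 - dotv w q) ^+ 2 <= dotv (A *m q - beta) (A *m q - beta)) ->
  q = shifted /\ dotv (A *m q - beta) (A *m q - beta) <= (shift / alpha) ^+ 2.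
Proof.
rewrite defect_shifted_expand defect_sign_mx_shifted => opt s_shift bound.
set P := dotv (A *m q - beta) _ in opt bound *; set d := q - shifted in opt *.
have alpha_neq0 : alpha != 0 by rewrite gt_eqF.
have sqr_shift : shift ^+ 2 / alpha = alpha * (shift / alpha) ^+ 2 by field.
have key : shift ^+ 2 / alpha <= alpha * P + 2 * shift * dotv w d.
  have -> : 2 * shift = 2 * alpha * (shift / alpha) by field.
  rewrite sqr_shift; apply: (@sqr_le_add_linear _ _ _ _ _ s) => //.
  - by rewrite mulr_ge0 ?dotv_ge0 // ltW.
  - by rewrite mulrA divr_ge0 // ltW.
  rewrite -one_sub_dotv_shifted.
  have -> : 1 - dotv w shifted - dotv w d = 1 - dotv w q by rewrite /d dotvBr; ring.
  by move=> /bound; rewrite ler_pM2l.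
have d0 : dotv d d = 0 by apply/le_anti; rewrite dotv_ge0 andbT; lra.
split; first by apply/eqP; rewrite -subr_eq0; apply/eqP/dotv_eq0.
rewrite -(ler_pM2l alpha_gt0) -sqr_shift.
by move: opt; rewrite d0 (dotv_eq0 d0) dotvC dotv0l; lra.
Qed.

(* The reference vector [u] (a column of [A], or [beta] itself) turns the
   residual [|A q - beta|] into a bound on [1 - <w, q>] through the slacks of
   the sign pattern [w]; optimality of [shifted] forces all slacks to vanish. *)
Lemma maximizer_sign_pattern A q s u :
  is_maximizer alpha beta gamma A q -> (forall j, 0 < shifted j 0) ->
  s ^+ 2 = 1 -> 0 <= s * shift -> dotv u u = 1 ->
  (forall j, s * dotv (col j A) u <= s * w j 0) -> s <= s * dotv beta u ->
  q = shifted /\ A = sign_mx w.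
Proof.
move=> max shifted_gt0 s2 s_shift u1 col_le beta_ge.
case: (max) => Ain q_ge0 _.
have shifted_ge0 : nonneg_vec shifted by move=> j; apply: ltW.
set W := dotv w q; set x := A *m q.
have slackE : s * W - s * dotv x u =
    \sum_j q j 0 * (s * w j 0 - s * dotv (col j A) u).
  rewrite /W /x dotv_mulmxl /dotv !mulr_sumr -sumrB.
  by apply: eq_bigr => j _; ring.
have slack_ge0 : 0 <= s * W - s * dotv x u.
  by rewrite slackE sumr_ge0 // => j _; rewrite mulr_ge0 ?subr_ge0.
set E := s * dotv beta u - s + (s * W - s * dotv x u).
have E_ge0 : 0 <= E by rewrite /E; lra.
have lower : (s * (1 - W) + E) ^+ 2 <= dotv (x - beta) (x - beta).
  have -> : s * (1 - W) + E = - s * (dotv x u - dotv beta u) by rewrite /E; ring.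
  by rewrite exprMn sqrrN s2 mul1r -dotvBl dotv_sqr_le_unit.
have [q_eq res_le] : q = shifted /\ dotv (x - beta) (x - beta) <= (shift / alpha) ^+ 2.
  apply: shifted_optimal (maximizer_defect_le max sign_mx_in shifted_ge0) s_shift _.
  move=> sW_ge0; apply: le_trans lower.
  have -> : (1 - W) ^+ 2 = (s * (1 - W)) ^+ 2 by rewrite exprMn s2 mul1r.
  exact: sqr_le_sqr_addr.
have W_eq : 1 - W = shift / alpha by rewrite /W q_eq one_sub_dotv_shifted.
have E0 : E = 0.
  have sW_ge0 : 0 <= s * (1 - W) by rewrite W_eq mulrA divr_ge0 // ltW.
  apply: (sqr_addr_le_sqr sW_ge0 E_ge0); apply: le_trans lower _.
  by rewrite exprMn s2 mul1r W_eq.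
have beta_u : beta = u.
  have sb : s * dotv beta u = s by rewrite /E in E0; lra.
  have : dotv beta u = 1 by rewrite -[LHS]mul1r -s2 expr2 -mulrA sb -expr2.
  by move=> /(dotv_unit_sign beta1 u1 (expr1n _ _)); rewrite scale1r.
have col_eq j : col j A = w j 0 *: beta.
  have q_gt0 i : 0 < q i 0 by rewrite q_eq.
  have c_ge0 i : 0 <= s * w i 0 - s * dotv (col i A) u by rewrite subr_ge0.
  have slack0 : s * w j 0 - s * dotv (col j A) u = 0.
    by apply: (psumr_weighted_eq0 q_gt0 c_ge0); rewrite -slackE; rewrite /E in E0; lra.
  rewrite beta_u; apply: (dotv_unit_sign _ u1 (w_sign j)); first exact/norm2_eq1.
  have : w j 0 - dotv (col j A) u = 0.
    by rewrite -[LHS]mul1r -s2 expr2 -mulrA mulrBr slack0 mulr0.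
  by move/eqP; rewrite subr_eq0 eq_sym => /eqP.
split=> //; apply/matrixP => k j.
by have := congr1 (fun v : 'cV_m => v k 0) (col_eq j); rewrite !mxE.
Qed.

End SignPattern.
End Defect.

Lemma exists_unit_cols_mulmx (R : realType) n m (beta : 'cV[R]_m) (gamma : 'cV[R]_n) :
  (2 <= m)%N -> dotv beta beta = 1 -> (forall j, 0 < gamma j 0) ->
  rfun gamma <= 1 -> 1 <= Rfun gamma ->
  exists A0 : 'M[R]_(m, n), inAset A0 /\ A0 *m gamma = beta.
Proof.
move=> m_ge2 beta1 gamma_gt0 r_le1 R_ge1.
have gamma_ge0 j : 0 <= gamma j 0 by apply: ltW.
have R_sum : Rfun gamma = \sum_j gamma j 0 by apply: norm1_nonneg.
have long j : 2 * gamma j 0 <= \sum_j gamma j 0 + 1.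
  have := le_bigmax 0 (fun j => `|gamma j 0|) j; rewrite ger0_norm //.
  by move: r_le1; rewrite /rfun -/(Rfun gamma) R_sum -/(norminf gamma); lra.
have [x [y [sides sumx sumy]]] : exists x y : 'I_n -> R, [/\ forall j,
    x j ^+ 2 + y j ^+ 2 = gamma j 0 ^+ 2, \sum_j x j = 1 & \sum_j y j = 0].
  apply: (plane_polygon_closure (d := 1)) => //.
  - by rewrite expr0n addr0.
  - by rewrite -R_sum.
have [e [e1 e_beta]] := exists_unit_orthogonal m_ge2 beta1.
pose A0 : 'M[R]_(m, n) := \matrix_(p, j) ((x j * beta p 0 + y j * e p 0) / gamma j 0).
have colA0 j : col j A0 = (gamma j 0)^-1 *: (x j *: beta + y j *: e).
  by apply/matrixP => p k; rewrite !mxE (ord1 k) mulrC.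
exists A0; split.
  move=> j; apply/norm2_eq1; rewrite colA0 dotvZl dotvZr dotvDl !dotvDr !dotvZl !dotvZr.
  rewrite beta1 e1 e_beta (dotvC beta e) e_beta !mulr0 !mulr1 addr0 add0r -!expr2 sides.
  by field; rewrite gt_eqF.
rewrite mulmx_cols.
under eq_bigr => j _ do rewrite colA0 scalerA mulfV ?gt_eqF ?gamma_gt0 // scale1r.
by rewrite big_split /= -!scaler_suml sumx sumy scale1r scale0r addr0.
Qed.

Lemma maximizer_balanced (R : realType) (n m : nat) (alpha : R) (beta : 'cV[R]_m)
  (gamma : 'cV[R]_n) (A : 'M[R]_(m, n)) (q : 'cV[R]_n) :
  (0 < n)%N -> (2 <= m)%N -> 0 < alpha -> dotv beta beta = 1 ->
  (forall i, 0 < gamma i 0) -> is_maximizer alpha beta gamma A q ->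
  rfun gamma <= 1 -> 1 <= Rfun gamma ->
  q = gamma /\ A *m q = beta /\
  ((exists sigma : 'I_n -> R, (forall i, sigma i = 1 \/ sigma i = -1) /\
     \sum_(i < n) sigma i * gamma i 0 = 1) \/ (2 <= \rank A)%N).
Proof.
move=> n_gt0 m_ge2 alpha_gt0 beta1 gamma_gt0 max r_le1 R_ge1.
have [A0 [A0in A0gamma]] := exists_unit_cols_mulmx m_ge2 beta1 gamma_gt0 r_le1 R_ge1.
have gamma_ge0 : nonneg_vec gamma by move=> j; apply: ltW.
have := maximizer_defect_le beta1 max A0in gamma_ge0.
rewrite {2}/defect A0gamma !subrr !dotv0l mulr0 addr0 /defect.
have := dotv_ge0 (A *m q - beta); have := dotv_ge0 (q - gamma).
set a := dotv (A *m q - beta) _; set b := dotv (q - gamma) _ => b_ge0 a_ge0 ab_le0.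
have a0 : a = 0 by apply/le_anti; rewrite a_ge0 andbT -(pmulr_rle0 _ alpha_gt0); nra.
have b0 : b = 0 by apply/le_anti; rewrite b_ge0 andbT; nra.
have /eqP q_eq := dotv_eq0 b0; have /eqP x_eq := dotv_eq0 a0.
move: q_eq x_eq; rewrite !subr_eq0 => /eqP q_eq /eqP x_eq.
split=> //; split=> //; apply: sign_pattern_or_rank_ge2 => //.
- by move=> j; case: max => Ain _ _; apply/norm2_eq1.
- by rewrite -q_eq x_eq.
Qed.

Section Regimes.
Variables (R : realType) (n m : nat) (alpha : R) (beta : 'cV[R]_m) (gamma : 'cV[R]_n).
Hypotheses (alpha_gt0 : 0 < alpha) (beta1 : dotv beta beta = 1).
Hypothesis gamma_gt0 : forall i, 0 < gamma i 0.
Variables (A : 'M[R]_(m, n)) (q : 'cV[R]_n).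
Hypothesis max : is_maximizer alpha beta gamma A q.

Let cols1 j : dotv (col j A) (col j A) = 1.
Proof. by case: max => Ain _ _; apply/norm2_eq1. Qed.

Let gamma_ge0 : nonneg_vec gamma.
Proof. by move=> j; apply: ltW. Qed.

Lemma maximizer_small_mass : Rfun gamma <= 1 ->
  (forall i, q i 0 = gamma i 0 + alpha * (1 - Rfun gamma) / (1 + n%:R * alpha)) /\
  A *m q = Rfun q *: beta /\ A = \matrix_(k < m, j < n) beta k 0.
Proof.
move=> small; pose w : 'cV[R]_n := const_mx 1.
have w_sign j : w j 0 ^+ 2 = 1 by rewrite mxE expr1n.
have dotv_w v : nonneg_vec v -> dotv w v = Rfun v.
  by move=> v_ge0; rewrite /Rfun norm1_nonneg //; apply: eq_bigr => j _; rewrite mxE mul1r.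
have shift_eq : shift alpha gamma w = alpha * (1 - Rfun gamma) / (1 + n%:R * alpha).
  by rewrite /shift dotv_w.
have shift_ge0 : 0 <= shift alpha gamma w.
  by rewrite shift_eq divr_ge0 ?mulr_ge0 ?subr_ge0 // ltW ?shift_den_gt0.
have shifted_gt0 j : 0 < shifted alpha gamma w j 0.
  by rewrite !mxE mulr1 ltr_wpDr.
have [q_eq A_eq] : q = shifted alpha gamma w /\ A = sign_mx beta w.
  apply: (maximizer_sign_pattern alpha_gt0 beta1 w_sign (s := 1) (u := beta) max);
    rewrite ?expr1n ?mul1r ?beta1 // => j.
  by rewrite !mul1r mxE dotv_unit_le1.
have q_ge0 : nonneg_vec q by case: max.
split; first by move=> i; rewrite q_eq !mxE mulr1 shift_eq.
split; first by rewrite A_eq mulmx_sign_mx dotv_w.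
by rewrite A_eq; apply/matrixP => k j; rewrite !mxE mul1r.
Qed.

Lemma maximizer_dominant (i : 'I_n) : (2 <= n)%N -> 1 <= rfun gamma ->
  gamma i 0 = norminf gamma ->
  q i 0 = gamma i 0 - alpha * (rfun gamma - 1) / (1 + n%:R * alpha) /\
  (forall j, j != i -> q j 0 = gamma j 0 + alpha * (rfun gamma - 1) / (1 + n%:R * alpha)) /\
  A *m q = rfun q *: beta /\
  A = \matrix_(k < m, j < n) (if j == i then beta k 0 else - beta k 0).
Proof.
move=> n_ge2 dom gamma_i.
set c := alpha * (rfun gamma - 1) / (1 + n%:R * alpha).
pose w : 'cV[R]_n := \col_j (if j == i then 1 else -1).
have w_sign j : w j 0 ^+ 2 = 1 by rewrite mxE; case: ifP; rewrite ?sqrrN expr1n.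
have dotv_w v : dotv w v = v i 0 - \sum_(j | j != i) v j 0.
  rewrite /dotv (bigD1 i) //= mxE eqxx mul1r -sumrN.
  by congr (_ + _); apply: eq_bigr => j /negbTE ji; rewrite mxE ji mulN1r.
have rfun_w v : nonneg_vec v -> norminf v = v i 0 -> rfun v = dotv w v.
  move=> v_ge0 vi; rewrite /rfun norm1_nonneg // vi dotv_w (bigD1 i) //=; ring.
have N_ge2 : 2 <= n%:R :> R by rewrite ler_nat.
have shift_eq : shift alpha gamma w = - c.
  rewrite /shift -rfun_w // /c; field; exact/lt0r_neq0/shift_den_gt0.
have gamma_rest j : j != i -> rfun gamma <= gamma i 0 - gamma j 0.
  move=> ji; rewrite rfun_w // dotv_w lerD2l lerN2 (bigD1 j) //= lerDl.
  by apply: sumr_ge0 => l _; apply: gamma_ge0.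
have c_ge0 : 0 <= c by rewrite divr_ge0 ?mulr_ge0 ?subr_ge0 // ltW ?shift_den_gt0.
have ci : 2 * c <= gamma i 0.
  apply: dominant_shift_le => //; rewrite rfun_w // dotv_w lerBlDr lerDl.
  by apply: sumr_ge0 => l _; apply: gamma_ge0.
have shifted_eq j : shifted alpha gamma w j 0 = gamma j 0 + (if j == i then - c else c).
  by rewrite !mxE shift_eq; case: ifP; rewrite ?mulr1 ?mulrN1 ?opprK.
have shifted_gt0 j : 0 < shifted alpha gamma w j 0.
  rewrite shifted_eq; case: ifP => [/eqP ->|_]; last by rewrite ltr_wpDr.
  by have := gamma_gt0 i; lra.
have [q_eq A_eq] : q = shifted alpha gamma w /\ A = sign_mx beta w.
  apply: (maximizer_sign_pattern alpha_gt0 beta1 w_sign (s := -1) (u := col i A) max) => //.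
  - by rewrite sqrrN expr1n.
  - by rewrite shift_eq mulN1r opprK.
  - move=> j; rewrite !mulN1r lerN2 mxE; case: (eqVneq j i) => [->|_]; first by rewrite cols1.
    exact: dotv_unit_geN1.
  - by rewrite !mulN1r lerN2 dotv_unit_le1.
have q_ge0 : nonneg_vec q by case: max.
have q_off j : j != i -> q j 0 = gamma j 0 + c by move=> /negbTE ji; rewrite q_eq shifted_eq ji.
have q_i : q i 0 = gamma i 0 - c by rewrite q_eq shifted_eq eqxx.
split=> //; split=> //; split.
  rewrite A_eq mulmx_sign_mx rfun_w //; apply: norminf_dominant => // j.
  rewrite ger0_norm //; case: (eqVneq j i) => [-> //|ji].
  have := dominant_shift_le alpha_gt0 N_ge2 dom (gamma_rest j ji).
  by rewrite q_off // q_i -/c; lra.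
rewrite A_eq; apply/matrixP => k j; rewrite !mxE.
by case: ifP; rewrite ?mul1r ?mulN1r.
Qed.

End Regimes.

Theorem proposition2 (R : realType) (n m : nat) (hn : (2 <= n)%N) (hm : (2 <= m)%N)
  (alpha : R) (beta : 'cV[R]_m) (gamma : 'cV[R]_n)
  (halpha : 0 < alpha) (hbeta : norm2 beta = 1) (hgamma : forall i, 0 < gamma i 0)
  (A : 'M[R]_(m, n)) (q : 'cV[R]_n)
  (hmax : is_maximizer alpha beta gamma A q) :
  let x := A *m q in
  (rfun gamma <= 1 <= Rfun gamma ->
     q = gamma /\ x = beta /\
     (~ (exists sigma : 'I_n -> R,
           (forall i, sigma i = 1 \/ sigma i = -1) /\
           \sum_(i < n) sigma i * gamma i 0 = 1) ->
        (2 <= \rank A)%N)) /\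
  (Rfun gamma <= 1 ->
     (forall i, q i 0 = gamma i 0 + alpha * (1 - Rfun gamma) / (1 + n%:R * alpha)) /\
     x = Rfun q *: beta /\
     A = \matrix_(k < m, j < n) beta k 0) /\
  (1 <= rfun gamma -> forall i : 'I_n, gamma i 0 = norminf gamma ->
     q i 0 = gamma i 0 - alpha * (rfun gamma - 1) / (1 + n%:R * alpha) /\
     (forall j, j != i -> q j 0 = gamma j 0 + alpha * (rfun gamma - 1) / (1 + n%:R * alpha)) /\
     x = rfun q *: beta /\
     A = \matrix_(k < m, j < n) (if j == i then beta k 0 else - beta k 0)).
Proof.
move=> x; have beta1 := (norm2_eq1 beta).1 hbeta.
have n_gt0 : (0 < n)%N by apply: leq_trans hn.
split.
  move=> /andP [r_le1 R_ge1].
  have [q_eq [x_eq rank]] := maximizer_balanced n_gt0 hm halpha beta1 hgamma hmax r_le1 R_ge1.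
  by split=> //; split=> // no_sigma; case: rank.
split; first exact: maximizer_small_mass.
by move=> r_ge1 i gamma_i; apply: maximizer_dominant.
Qed.
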